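(* Let $m,g>0$ and $0<c<1$, and consider the hybrid system on $(x,y)\in T^*\mathbb{R}^+$: $$\dot x=\tfrac{1}{m}y,\quad \dot y=-mg\quad (x>0);\qquad (x,y)\mapsto(x,-c^2y)\quad (x=0,\ y<0).$$ For initial data $(x_0,y_0)$ with $x_0\ge 0$ (and $y_0>0$ if $x_0=0$) let $\zeta(x_0,y_0)$ be the Zeno time, i.e. the limit of the impact times: $$\zeta(x_0,y_0)=\frac{1}{mg}\Big(y_0+\sqrt{y_0^2+2m^2gx_0}\Big)+\frac{2c^2}{mg(1-c^2)}\sqrt{y_0^2+2m^2gx_0}.$$ Fix $y_0>0$ and consider the trajectory from $(0,y_0)$, with Zeno time $t_Z=\frac{2y_0}{mg(1-c^2)}$. Let $\Phi(t)$ be the state-transition matrix of the hybrid variational equation $\delta\dot z=A\,\delta z$ between impacts and $\delta z^+=J(y^-)\,\delta z^-$ at impacts, where $$A=\begin{bmatrix}0&1/m\\0&0\end{bmatrix},\qquad J(y)=\begin{bmatrix}-c^2&0\\-\frac{m^2g}{y}(1+c^2)&-c^2\end{bmatrix},$$ $y^-<0$ being the momentum just before the impact, and $\Phi(0)=I$. Then the limit $\Phi_Z=\lim_{t\nearrow t_Z}\Phi(t)$ exists and equals $$\Phi_Z=\begin{bmatrix}0&0\\ \frac{m^2g}{y_0}\frac{1+c^2}{1-c^2}&\frac{2}{1-c^2}\end{bmatrix},$$ so $\det\Phi_Z=0$, and moreover $\ker d\zeta_{(0,y_0)}=\ker\Phi_Z$ (both spanned by $(-2y_0,\ m^2g(1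+c^2))^\top$).
   Context: $J(y)$ is the saltation (hybrid Jacobian) matrix of the reset at the guard $x=0$. The product defining $\Phi$ multiplies successive factors on the left. *)

From HB Require Import structures.
From mathcomp Require Import all_boot all_order all_algebra.
From mathcomp Require Import all_classical all_reals all_analysis.
Set Implicit Arguments. Unset Strict Implicit. Unset Printing Implicit Defensive.
Import Order.TTheory GRing.Theory Num.Theory.
Local Open Scope ring_scope.

Section BouncingBall.
Variable R : realType.

Definition mx2 (a b c d : R) : 'M[R]_2 :=
  \matrix_(i < 2, j < 2)
    if (i : nat) == 0%N then (if (j : nat) == 0%N then a else b)
    else (if (j : nat) == 0%N then c else d).

Definition col2 (a b : R) : 'cV[R]_2 :=
  \col_(i < 2) if (i : nat) == 0%N then a else b.

Definition Amat (m : R) : 'M[R]_2 := mx2 0 m^-1 0 0.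

(* exp(s A) = I + s A, since A^2 = 0 *)
Definition flowA (m s : R) : 'M[R]_2 := 1%:M + s *: Amat m.

Definition Jmat (m g c y : R) : 'M[R]_2 :=
  mx2 (- c ^+ 2) 0 (- (m ^+ 2 * g / y) * (1 + c ^+ 2)) (- c ^+ 2).

(* post-impact momenta along the trajectory from (0, y0):
   yplus 0 = y0 (initial momentum); yplus (k+1) = - c^2 * (pre-impact momentum) *)
Fixpoint yplus (c y0 : R) (k : nat) : R :=
  match k with
  | 0%N => y0
  | k'.+1 => - c ^+ 2 * (- yplus c y0 k')
  end.

(* momentum just before the (k+1)-th impact: a flight started at x = 0
   with momentum p > 0 returns to x = 0 with momentum -p *)
Definition yminus (c y0 : R) (k : nat) : R := - yplus c y0 k.

(* duration of a flight started at x = 0 with momentum p: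
   x(t) = p t / m - g t^2 / 2 vanishes again at t = 2 p / (m g) *)
Definition flight (m g p : R) : R := 2 * p / (m * g).

(* t_0 = 0; t_(k+1) = time of the (k+1)-th impact *)
Definition impact_time (m g c y0 : R) (k : nat) : R :=
  \sum_(j < k) flight m g (yplus c y0 j).

(* state-transition matrix just after the k-th impact (P 0 = I);
   successive factors multiply on the left *)
Fixpoint Pimp (m g c y0 : R) (k : nat) : 'M[R]_2 :=
  match k with
  | 0%N => 1%:M
  | k'.+1 => Jmat m g c (yminus c y0 k') *m flowA m (flight m g (yplus c y0 k'))
               *m Pimp m g c y0 k'
  end.

Definition zeta (m g c : R) (z : 'cV[R]_2) : R :=
  let x0 := z 0 0 in let y0 := z 1 0 in
  (m * g)^-1 * (y0 + Num.sqrt (y0 ^+ 2 + 2 * m ^+ 2 * g * x0))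
  + 2 * c ^+ 2 / (m * g * (1 - c ^+ 2)) * Num.sqrt (y0 ^+ 2 + 2 * m ^+ 2 * g * x0).

End BouncingBall.

(* Between impacts the variational flow is exp(sA) = I + sA.  After k impacts the
   momentum is alpha y0 with alpha = c^(2k), the elapsed time is tZ (1 - alpha), and the
   accumulated product of saltation matrices and flows is an explicit matrix
   [Pimp_closed alpha], polynomial in alpha and equal to PhiZ at alpha = 0.  During the
   following flight, of duration O(alpha), Phi stays within O(alpha) of PhiZ, and
   alpha <= (tZ - t) / (c^2 tZ); this gives the limit.  The kernel statements are direct
   computations: d zeta at (0, y0) is (m g)^-1 times the second row of PhiZ, whose first
   row vanishes. *)

From HB Require Import structures.
From mathcomp Require Import all_boot all_order all_algebra.
From mathcomp Require Import all_classical all_reals all_analysis.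
From mathcomp Require Import ring lra.
Import Order.TTheory GRing.Theory Num.Theory.
Import numFieldNormedType.Exports.
Local Open Scope classical_set_scope.
Local Open Scope ring_scope.
Set Implicit Arguments. Unset Strict Implicit. Unset Printing Implicit Defensive.

Section Mx2.
Variable R : realType.
Implicit Types a b c d x y : R.

Lemma mx2_mul a b c d a' b' c' d' :
  mx2 a b c d *m mx2 a' b' c' d' =
  mx2 (a * a' + b * c') (a * b' + b * d') (c * a' + d * c') (c * b' + d * d').
Proof.
apply/matrixP => i j; rewrite !mxE !big_ord_recr big_ord0 /= !mxE add0r.
by case: i => [[|[|i]] ?]; case: j => [[|[|j]] ?].
Qed.

Lemma mx2_sub a b c d a' b' c' d' :
  mx2 a b c d - mx2 a' b' c' d' = mx2 (a - a') (b - b') (c - c') (d - d').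
Proof. by apply/matrixP => i j; rewrite !mxE; case: ifP; case: ifP. Qed.

Lemma mx2_1 : mx2 1 0 0 1 = 1%:M :> 'M[R]_2.
Proof.
apply/matrixP => i j; rewrite !mxE.
by case: i => [[|[|i]] ?]; case: j => [[|[|j]] ?].
Qed.

Lemma mx2_col2 a b c d x y :
  mx2 a b c d *m col2 x y = col2 (a * x + b * y) (c * x + d * y).
Proof.
apply/matrixP => i j; rewrite !mxE !big_ord_recr big_ord0 /= !mxE add0r.
by case: i => [[|[|i]] ?].
Qed.

Lemma col2_coords (v : 'cV[R]_2) : v = col2 (v 0 0) (v 1 0).
Proof.
apply/matrixP => i j; rewrite !mxE (ord1 j).
by case: i => [[|[|i]] ?] //=; congr (v _ _); apply/val_inj.
Qed.

Lemma col2_eq0 x y : col2 x y = 0 <-> x = 0 /\ y = 0.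
Proof.
split => [/matrixP v0 | [-> ->]].
  by split; [have := v0 0 0 | have := v0 1 0]; rewrite !mxE.
by apply/matrixP => i j; rewrite !mxE if_same.
Qed.

Lemma scale_col2 a x y : a *: col2 x y = col2 (a * x) (a * y).
Proof. by apply/matrixP => i j; rewrite !mxE; case: ifP. Qed.

Lemma det_mx2 a b c d : \det (mx2 a b c d) = a * d - b * c.
Proof.
rewrite (expand_det_row _ 0) !big_ord_recr big_ord0 /= add0r.
by rewrite /cofactor !det_mx11 !mxE /= addn0 add0n expr0 expr1; ring.
Qed.

Lemma normr_mx2_le a b c d e :
  `|a| <= e -> `|b| <= e -> `|c| <= e -> `|d| <= e -> `|mx2 a b c d| <= e.
Proof.
move=> ha hb hc hd; have e0 : 0 <= e := le_trans (normr_ge0 a) ha.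
rewrite [`|_|]mx_normrE; apply/bigmax_le => // -[i j] _ /=; rewrite !mxE.
by case: i => [[|[|i]] ?]; case: j => [[|[|j]] ?].
Qed.

Lemma mx2_00_mulmx_eq0 p q (v : 'cV[R]_2) :
  mx2 0 0 p q *m v = 0 <-> p * v 0 0 + q * v 1 0 = 0.
Proof.
by rewrite {1}(col2_coords v) mx2_col2 col2_eq0 !mul0r addr0; split => [[]|].
Qed.

Lemma mx2_kernel_line p q w0 w1 (v : 'cV[R]_2) :
  q != 0 -> w0 != 0 -> p * w0 + q * w1 = 0 ->
  mx2 0 0 p q *m v = 0 <-> exists k, v = k *: col2 w0 w1.
Proof.
move=> q0 w00 hw; rewrite mx2_00_mulmx_eq0.
split => [hxy | [k ->]]; last first.
  by rewrite !mxE /= mulrCA [q * _]mulrCA -mulrDr hw mulr0.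
exists (v 0 0 / w0); rewrite {1}(col2_coords v) scale_col2 mulfVK //; congr col2.
set x := v 0 0 in hxy *; set y := v 1 0 in hxy *.
apply/eqP; rewrite -subr_eq0; apply/eqP.
have -> : y - x / w0 * w1 = (w0 * (p * x + q * y) - x * (p * w0 + q * w1)) / (q * w0).
  by field; apply/andP.
by rewrite hxy hw !mulr0 subrr mul0r.
Qed.
End Mx2.

Lemma cvg_norm_dominated (R : realFieldType) (V : normedModType R) T (F : set_system T)
    {FF : Filter F} (f : T -> V) (l : V) (h : T -> R) :
  h @ F --> 0 -> (\forall t \near F, `|l - f t| <= h t) -> f @ F --> l.
Proof.
move=> h0 fh; apply/cvgrPdist_le => e e0.
near=> t; rewrite (le_trans (near fh t _)) // (le_trans (ler_norm (h t))) //.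
by near: t; exact: cvgr0_norm_le.
Unshelve. all: by end_near.
Qed.

Lemma is_diff_coord {R : numFieldType} {m n : nat} (M : 'M[R]_(m, n)) i j :
  is_diff M (fun N : 'M[R]_(m, n) => N i j) (fun N => N i j).
Proof.
have coord_linear : linear (fun N : 'M[R]_(m, n) => N i j).
  by move=> k A B; rewrite !mxE.
pose f : {linear 'M[R]_(m, n) -> R} :=
  HB.pack (fun N : 'M[R]_(m, n) => N i j) (GRing.isLinear.Build _ _ _ _ _ coord_linear).
change (is_diff M f f).
apply: DiffDef; first exact/linear_differentiable/coord_continuous.
by rewrite diff_lin //; exact: coord_continuous.
Qed.

Lemma is_diff_sqrt {R : realType} (x : R) : 0 < x ->
  is_diff x Num.sqrt (fun t => t *: (2 * Num.sqrt x)^-1).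
Proof.
move=> x0; have D := is_derive1_sqrt x0.
apply: DiffDef; first by apply/derivable1_diffP; exact: ex_derive.
by rewrite deriv1E ?derive1E ?derive_val //; exact: ex_derive.
Qed.

Lemma flowA_mx2 (R : realType) (m s : R) : flowA m s = mx2 1 (s / m) 0 1.
Proof.
apply/matrixP => i j; rewrite !mxE.
by case: i => [[|[|i]] ?]; case: j => [[|[|j]] ?]; rewrite /= ?mulr0 ?addr0 ?add0r.
Qed.

Lemma yplusE (R : realType) (c y0 : R) k : yplus c y0 k = (c ^+ 2) ^+ k * y0.
Proof. by elim: k => [|k /= ->]; rewrite ?mul1r // [_ ^+ k.+1]exprS; ring. Qed.

Section BouncingBall.
Variable R : realType.
Variables m g c y0 : R.
Hypotheses (hm : 0 < m) (hg : 0 < g) (hc0 : 0 < c) (hc1 : c < 1) (hy0 : 0 < y0).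

Let a := c ^+ 2.
Let rho := (1 - a)^-1.
Let u := (1 + a) * rho.
Let beta := 2 * y0 / (m ^+ 2 * g).

Let m_neq0 : m != 0 := lt0r_neq0 hm.
Let g_neq0 : g != 0 := lt0r_neq0 hg.
Let y0_neq0 : y0 != 0 := lt0r_neq0 hy0.
Let a_gt0 : 0 < a := exprn_gt0 2 hc0.
Let a_lt1 : a < 1. Proof. by rewrite expr_lt1 // ltW. Qed.
Let onema_neq0 : 1 - a != 0. Proof. by rewrite subr_eq0 gt_eqF. Qed.
Let rho_ge1 : 1 <= rho. Proof. by rewrite invf_ge1 ?subr_gt0 // gerBl ltW. Qed.
Let u_ge0 : 0 <= u.
Proof. by rewrite mulr_ge0 ?addr_ge0 ?(ltW a_gt0) // (le_trans ler01 rho_ge1). Qed.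
Let beta_gt0 : 0 < beta. Proof. by rewrite divr_gt0 ?mulr_gt0 ?exprn_gt0. Qed.

Definition zeno_time := 2 * y0 / (m * g * (1 - c ^+ 2)).

Definition PhiZ := mx2 0 0 (m ^+ 2 * g / y0 * ((1 + c ^+ 2) / (1 - c ^+ 2)))
                      (2 / (1 - c ^+ 2)).

Definition Pimp_closed (alpha : R) :=
  mx2 (alpha * (alpha - (1 - alpha) * u)) (- (beta * rho) * alpha * (1 - alpha))
      (2 / beta * u * (1 - alpha)) (alpha + 2 * rho * (1 - alpha)).

Lemma PhiZ_Pimp_closed : PhiZ = Pimp_closed 0.
Proof.
rewrite /PhiZ /Pimp_closed /u /rho /beta -/a.
by congr mx2; field; rewrite ?onema_neq0 ?y0_neq0 ?m_neq0 ?g_neq0.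
Qed.

Lemma zeno_time_gt0 : 0 < zeno_time.
Proof. by rewrite divr_gt0 ?mulr_gt0 // subr_gt0. Qed.

Lemma impact_timeS k :
  impact_time m g c y0 k.+1 = impact_time m g c y0 k + flight m g (a ^+ k * y0).
Proof. by rewrite /impact_time big_ord_recr yplusE. Qed.

Lemma impact_timeE k : impact_time m g c y0 k = zeno_time * (1 - a ^+ k).
Proof.
elim: k => [|k IH]; first by rewrite /impact_time big_ord0 expr0 subrr mulr0.
rewrite impact_timeS IH /flight [a ^+ k.+1]exprS /zeno_time -/a.
by field; rewrite m_neq0 g_neq0 onema_neq0.
Qed.

Lemma PimpE k : Pimp m g c y0 k = Pimp_closed (a ^+ k).
Proof.
elim: k => [|k /= ->].
  by rewrite /= /Pimp_closed expr0 -mx2_1; congr mx2; ring.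
rewrite /yminus yplusE flowA_mx2 /Jmat /flight /Pimp_closed !mx2_mul [a ^+ k.+1]exprS -/a.
have ak0 : a ^+ k != 0 by rewrite expf_neq0 // gt_eqF.
by congr mx2; rewrite /u /rho /beta; field; rewrite ?m_neq0 ?g_neq0 ?y0_neq0 ?onema_neq0 ?ak0.
Qed.

Lemma PhiZ_sub_flow_Pimp_closed alpha s :
  PhiZ - flowA m s *m Pimp_closed alpha =
  mx2 (- (alpha * (alpha - (1 - alpha) * u) + s / m * (2 / beta) * u * (1 - alpha)))
      (beta * rho * alpha * (1 - alpha) - s / m * (alpha + 2 * rho * (1 - alpha)))
      (2 / beta * u * alpha) ((2 * rho - 1) * alpha).
Proof.
by rewrite PhiZ_Pimp_closed flowA_mx2 /Pimp_closed mx2_mul mx2_sub; congr mx2; ring.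
Qed.

Let dev00_le alpha Z : 0 <= alpha <= 1 -> 0 <= Z <= 2 * alpha ->
  `|- (alpha * (alpha - (1 - alpha) * u) + Z * u * (1 - alpha))| <= (1 + 3 * u) * alpha.
Proof.
move=> /andP[alpha0 alpha1] /andP[Z0 Z_le]; have alpha1' : 0 <= 1 - alpha by lra.
have Z_gap : 0 <= 2 * alpha - Z by rewrite subr_ge0.
have u0 := u_ge0; have := mulr_ge0 alpha0 alpha1'; have := mulr_ge0 u0 alpha0.
have := mulr_ge0 (mulr_ge0 alpha0 alpha0) u0.
have := mulr_ge0 (mulr_ge0 Z_gap alpha1') u0.
have := mulr_ge0 (mulr_ge0 Z0 alpha1') u0.
by rewrite normrN ler_norml => *; apply/andP; split; nra.
Qed.

Let dev01_le alpha sg : 0 <= alpha <= 1 -> 0 <= sg <= beta * alpha ->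
  `|beta * rho * alpha * (1 - alpha) - sg * (alpha + 2 * rho * (1 - alpha))|
    <= beta * (1 + 3 * rho) * alpha.
Proof.
move=> /andP[alpha0 alpha1] /andP[sg0 sg_le]; have alpha1' : 0 <= 1 - alpha by lra.
have rho1 := rho_ge1; set P := alpha + 2 * rho * (1 - alpha).
have P0 : 0 <= P by rewrite addr_ge0 // mulr_ge0 //; lra.
have P_le : P <= 1 + 2 * rho by rewrite /P; nra.
have bra : 0 <= beta * rho * alpha :=
  mulr_ge0 (mulr_ge0 (ltW beta_gt0) (le_trans ler01 rho1)) alpha0.
have := mulr_ge0 bra alpha1'; have := mulr_ge0 bra alpha0.
have : 0 <= (beta * alpha - sg) * P by rewrite mulr_ge0 // subr_ge0.
have : 0 <= beta * alpha * (1 + 2 * rho - P).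
  by rewrite mulr_ge0 ?subr_ge0 // mulr_ge0 // ltW.
have := mulr_ge0 sg0 P0.
by rewrite ler_norml => *; apply/andP; split; lra.
Qed.

Lemma flow_Pimp_closed_near_PhiZ : exists2 K, 0 <= K & forall alpha s,
  0 <= alpha <= 1 -> 0 <= s <= flight m g (alpha * y0) ->
  `|PhiZ - flowA m s *m Pimp_closed alpha| <= K * alpha.
Proof.
have rho1 := rho_ge1; have u0 := u_ge0.
have K1_ge0 : 0 <= beta * (1 + 3 * rho) by rewrite mulr_ge0 ?ltW //; lra.
have K2_ge0 : 0 <= 2 / beta * u by rewrite mulr_ge0 // divr_ge0 // ltW.
exists (1 + 3 * u + beta * (1 + 3 * rho) + 2 / beta * u + 2 * rho); first by lra.
move=> alpha s alpha01 /andP[s0 ss]; have /andP[alpha0 alpha1] := alpha01.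
have sg_le : s / m <= beta * alpha.
  rewrite ler_pdivrMr // (le_trans ss) // le_eqVlt; apply/orP; left; apply/eqP.
  by rewrite /flight /beta; field; rewrite m_neq0 g_neq0.
have sg0 : 0 <= s / m by rewrite divr_ge0 // ltW.
rewrite PhiZ_sub_flow_Pimp_closed; apply: normr_mx2_le.
- apply: le_trans (dev00_le alpha01 _) _; last by rewrite ler_wpM2r //; lra.
  have Z0 : 0 <= s / m * (2 / beta) by rewrite mulr_ge0 // divr_ge0 // ltW.
  by rewrite Z0 /= [X in X <= _]mulrA ler_pdivrMr //; nra.
- apply: le_trans (dev01_le alpha01 _) _; last by rewrite ler_wpM2r //; lra.
  by rewrite sg0 sg_le.
- by rewrite ger0_norm ?(mulr_ge0 K2_ge0 alpha0) // ler_wpM2r //; lra.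
- have rho2 : 0 <= 2 * rho - 1 by lra.
  by rewrite ger0_norm ?(mulr_ge0 rho2 alpha0) // ler_wpM2r //; lra.
Qed.

Lemma impact_interval t : 0 <= t < zeno_time ->
  exists k, impact_time m g c y0 k <= t < impact_time m g c y0 k.+1.
Proof.
move=> /andP[t0 ttZ].
have [N tN] : exists N, t < impact_time m g c y0 N.
  have gap_gt0 : 0 < (zeno_time - t) / zeno_time by rewrite divr_gt0 ?subr_gt0 ?zeno_time_gt0.
  have /cvgr0_norm_lt/(_ _ gap_gt0)[N _ HN] : (fun n => a ^+ n) @ \oo --> 0.
    by apply: cvg_expr; rewrite ger0_norm ?a_lt1 // ltW // a_gt0.
  exists N; have := HN N (leqnn N).
  rewrite ger0_norm ?(exprn_ge0 _ (ltW a_gt0)) // impact_timeE ltr_pdivlMr ?zeno_time_gt0 //.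
  by have := zeno_time_gt0; nra.
have [[|k] tk kmin] := ex_minnP (ex_intro (fun n => t < impact_time m g c y0 n) N tN).
  by move: tk; rewrite /impact_time big_ord0 ltNge t0.
by exists k; rewrite tk andbT leNgt; apply/negP => /kmin; rewrite ltnn.
Qed.

Lemma pow_le_zeno_gap k t : t < impact_time m g c y0 k.+1 ->
  a ^+ k <= (zeno_time * a)^-1 * (zeno_time - t).
Proof.
rewrite impact_timeE [a ^+ k.+1]exprS => tk.
by rewrite ler_pdivlMl ?(mulr_gt0 zeno_time_gt0 a_gt0) //; lra.
Qed.

Lemma Phi_cvg (Phi : R -> 'M[R]_2) :
  (forall k t, impact_time m g c y0 k <= t < impact_time m g c y0 k.+1 ->
     Phi t = flowA m (t - impact_time m g c y0 k) *m Pimp m g c y0 k) ->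
  Phi t @[t --> zeno_time^'-] --> PhiZ.
Proof.
move=> HPhi; have [K K0 HK] := flow_Pimp_closed_near_PhiZ.
set C := K * (zeno_time * a)^-1.
apply: (@cvg_norm_dominated _ _ _ _ _ _ _ (fun t => C * (zeno_time - t))).
  apply: cvg_at_left_filter; rewrite -(mulr0 C) -(subrr zeno_time).
  by apply: cvgMr; apply: cvgB; [exact: cvg_cst | exact: cvg_id].
near=> t.
have /impact_interval[k /andP[tk tk1]] : 0 <= t < zeno_time.
  apply/andP; split; near: t; [exact: nbhs_left_ge zeno_time_gt0 | exact: nbhs_left_lt].
have ak0 : 0 <= a ^+ k := exprn_ge0 _ (ltW a_gt0).
have ak1 : a ^+ k <= 1 by rewrite exprn_ile1 // ltW ?a_gt0 ?a_lt1.
rewrite (HPhi k) ?tk ?tk1 // PimpE (le_trans (HK _ _ _ _)) //.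
- by rewrite ak0 ak1.
- by move: tk1; rewrite impact_timeS; lra.
- by rewrite /C -[X in _ <= X]mulrA ler_wpM2l // pow_le_zeno_gap.
Unshelve. all: by end_near.
Qed.

Let p0 := col2 0 y0.

(* The discriminant of the first-impact equation x0 + y0 t / m - g t^2 / 2 = 0, times m^2. *)
Let discriminant (z : 'cV[R]_2) := z 1 0 ^+ 2 + 2 * m ^+ 2 * g * z 0 0.

Lemma is_diff_discriminant :
  is_diff p0 discriminant (fun v => 2 * y0 * v 1 0 + 2 * m ^+ 2 * g * v 0 0).
Proof.
have X := is_diff_coord p0 0 0; have Y := is_diff_coord p0 1 0.
have := is_diffD (is_diffM Y Y) (is_diffZ (2 * m ^+ 2 * g) X).
rewrite (_ : _ + _ = discriminant); last by apply/funext => z; rewrite /= expr2.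
move=> hd; apply: (is_diff_eq hd); apply/funext => v.
by rewrite !fctE !mxE /= /GRing.scale /=; ring.
Qed.

Lemma is_diff_zeta :
  is_diff p0 (zeta m g c) (fun v => (m * g)^-1 * (PhiZ *m v) 1 0).
Proof.
have disc_p0 : discriminant p0 = y0 ^+ 2 by rewrite /discriminant !mxE /= mulr0 addr0.
have S : is_diff (discriminant p0) Num.sqrt (fun t => t *: (2 * y0)^-1).
  by rewrite disc_p0; have := is_diff_sqrt (exprn_gt0 2 hy0); rewrite sqrtr_sqr gtr0_norm.
have dS := is_diff_comp is_diff_discriminant S.
have := is_diffD (is_diffZ (m * g)^-1 (is_diffD (is_diff_coord p0 1 0) dS))
                 (is_diffZ (2 * c ^+ 2 / (m * g * (1 - c ^+ 2))) dS).
rewrite (_ : _ + _ = zeta m g c) // => hd; apply: (is_diff_eq hd); apply/funext => v.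
rewrite [in _ *m v](col2_coords v) /PhiZ mx2_col2 !fctE !mxE /= /GRing.scale /= -/a.
by field; rewrite onema_neq0 m_neq0 g_neq0 y0_neq0.
Qed.

Lemma diff_zeta_eq0 v : 'd (zeta m g c) p0 v = 0 <-> PhiZ *m v = 0.
Proof.
have zeta_diff := is_diff_zeta.
rewrite diff_val /PhiZ mx2_00_mulmx_eq0 {1}(col2_coords v) mx2_col2 !mxE /=.
split => [|->]; last by rewrite mulr0.
by move/eqP; rewrite mulf_eq0 invr_eq0 mulf_eq0 (negbTE m_neq0) (negbTE g_neq0) => /eqP.
Qed.

Lemma PhiZ_kernel v :
  PhiZ *m v = 0 <-> exists k, v = k *: col2 (- 2 * y0) (m ^+ 2 * g * (1 + c ^+ 2)).
Proof.
apply: mx2_kernel_line.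
- by rewrite mulf_neq0 ?invr_eq0 ?pnatr_eq0.
- by rewrite mulf_neq0 ?oppr_eq0 ?pnatr_eq0.
- by rewrite -/a; field; rewrite onema_neq0 y0_neq0.
Qed.

End BouncingBall.

Theorem proposition6p7 (R : realType) (m g c y0 : R)
  (hm : 0 < m) (hg : 0 < g) (hc0 : 0 < c) (hc1 : c < 1) (hy0 : 0 < y0)
  (Phi : R -> 'M[R]_2)
  (HPhi : forall (k : nat) (t : R),
      impact_time m g c y0 k <= t < impact_time m g c y0 k.+1 ->
      Phi t = flowA m (t - impact_time m g c y0 k) *m Pimp m g c y0 k) :
  let tZ := 2 * y0 / (m * g * (1 - c ^+ 2)) in
  let PhiZ := mx2 0 0 (m ^+ 2 * g / y0 * ((1 + c ^+ 2) / (1 - c ^+ 2)))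
                      (2 / (1 - c ^+ 2)) in
  let w := col2 (- 2 * y0) (m ^+ 2 * g * (1 + c ^+ 2)) in
  [/\ Phi t @[t --> tZ^'-] --> PhiZ,
      \det PhiZ = 0,
      differentiable (zeta m g c) (col2 0 y0),
      (forall v : 'cV[R]_2, 'd (zeta m g c) (col2 0 y0) v = 0 <-> PhiZ *m v = 0)
    & (forall v : 'cV[R]_2, PhiZ *m v = 0 <-> exists a : R, v = a *: w)].
Proof.
move=> tZ PhiZ' w; split.
- exact: Phi_cvg.
- by rewrite det_mx2 !mul0r subrr.
- by have := is_diff_zeta hm hg hc0 hc1 hy0 => ?; apply: ex_diff.
- exact: diff_zeta_eq0.
- exact: PhiZ_kernel.
Qed.
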